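(* The class of locally strongly sober spaces is projective, and so is the class of strongly sober spaces. That is: if $(p_{ij}\colon X_j\to X_i)_{i\sqsubseteq j\in I}$ is a projective system of topological spaces in which every $X_i$ is locally strongly sober (resp. strongly sober), then every projective limit of this system, taken in the category of topological spaces and continuous maps, is locally strongly sober (resp. strongly sober).
   Context: A projective system of topological spaces consists of a directed preordered set $(I,\sqsubseteq)$ (non-empty, any two elements have an upper bound), topological spaces $X_i$ ($i\in I$) and continuous maps $p_{ij}\colon X_j\to X_i$ for $i\sqsubseteq j$ with $p_{ii}=\mathrm{id}$ and $p_{ij}\circ p_{jk}=p_{ik}$. Its projective limit is its categorical limit in the category of topological spaces; canonically it is the subspace $\{\vec x\in\prod_{i\in I}X_i \mid p_{ij}(x_j)=x_i \text{ for all } i\sqsubseteq j\}$ of the product, with the coordinate projections. A class of spaces is projective if projective limits of projective systems of spaces in the class are in the class. The specialization preorder of a space is $x\le y$ iff every open neighbourhood of $x$ contains $y$; $\downarrow x$ denotes the set of points below $x$ (the closure of $\{x\}$). A space $X$ is locally strongly sober if for every convergent ultrafilter $\mathcal U$ on $X$, the set $\lim\mathcal U$ of its limits equals $\downarrow x$ for a unique point $x$; it is strongly sober if this holds for every ultrafilter $\mathcal U$ on $X$ (equivalently, $X$ is locally strongly sober and compact). Compactness assumes no separation axiom. *)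

From HB Require Import structures.
From mathcomp Require Import all_boot all_order.
From mathcomp Require Import all_classical all_reals all_analysis.
Set Implicit Arguments. Unset Strict Implicit. Unset Printing Implicit Defensive.
Local Open Scope classical_set_scope.

Definition spec_le (X : topologicalType) (x y : X) : Prop :=
  forall U : set X, open U -> U x -> U y.

Definition spec_down (X : topologicalType) (x : X) : set X :=
  [set y | spec_le y x].

Definition limits (X : topologicalType) (F : set_system X) : set X :=
  [set x | F --> x].

Definition locally_strongly_sober (X : topologicalType) : Prop :=
  forall U : set_system X, UltraFilter U -> (exists x : X, U --> x) ->
    exists! x : X, limits U = spec_down x.

Definition strongly_sober (X : topologicalType) : Prop :=
  forall U : set_system X, UltraFilter U ->
    exists! x : X, limits U = spec_down x.

Definition directed_preorder (I : Type) (le : I -> I -> Prop) : Prop :=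
  [/\ (forall i, le i i),
      (forall i j k, le i j -> le j k -> le i k),
      inhabited I &
      (forall i j, exists k, le i k /\ le j k)].

Definition projective_system (I : Type) (le : I -> I -> Prop)
  (X : I -> topologicalType) (p : forall i j, le i j -> X j -> X i) : Prop :=
  [/\ directed_preorder le,
      (forall i j (h : le i j), continuous (p i j h)),
      (forall i (h : le i i) (x : X i), p i i h x = x) &
      (forall i j k (hij : le i j) (hjk : le j k) (hik : le i k) (x : X k),
          p i j hij (p j k hjk x) = p i k hik x)].

Definition is_cone (I : Type) (le : I -> I -> Prop)
  (X : I -> topologicalType) (p : forall i j, le i j -> X j -> X i)
  (Y : topologicalType) (q : forall i, Y -> X i) : Prop :=
  (forall i, continuous (q i)) /\
  (forall i j (h : le i j) (y : Y), p i j h (q j y) = q i y).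

Definition is_projective_limit (I : Type) (le : I -> I -> Prop)
  (X : I -> topologicalType) (p : forall i j, le i j -> X j -> X i)
  (Y : topologicalType) (q : forall i, Y -> X i) : Prop :=
  is_cone p q /\
  forall (Z : topologicalType) (f : forall i, Z -> X i), is_cone p f ->
    exists! g : Z -> Y, continuous g /\ (forall i (z : Z), q i (g z) = f i z).

From mathcomp Require Import all_boot all_order.
From mathcomp Require Import all_classical all_reals all_analysis.
Set Implicit Arguments. Unset Strict Implicit. Unset Printing Implicit Defensive.
Local Open Scope classical_set_scope.

(* Let U be an ultrafilter on the limit Y (a convergent one, in the local
   case).  Each image q_i U has limit set the down-set of a point x_i, and as Y
   carries the initial topology of the projections, lim U consists of the y
   with q_i y <= x_i for all i.  In a (locally) strongly sober space every
   codirected family bounded from below has an infimum: an ultrafilter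
   refining the down-sets of the family has exactly its lower bounds as
   limits.  By Zorn's lemma there is a minimal family m <= x with
   p_ij (m_j) <= m_i lying above the projections of lim U.  Replacing m_i by
   the infimum of the p_ij (m_j), j above i, preserves these properties, so by
   minimality and T0 the family m is a thread, i.e. a point y of Y, and
   lim U is the down-set of y. *)

Section Specialization.
Variable X : topologicalType.

Lemma spec_le_refl (x : X) : spec_le x x.
Proof. by []. Qed.

Lemma spec_le_trans (x y z : X) : spec_le x y -> spec_le y z -> spec_le x z.
Proof. by move=> xy yz U oU Ux; apply: yz => //; exact: xy. Qed.

Lemma spec_le_cvg (x y : X) : spec_le x y <-> principal_filter y --> x.
Proof.
split=> [xy A|yx U oU Ux].
  by rewrite nbhsE => -[B [oB Bx] BA]; apply/principal_filterP/BA; exact: xy.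
by have /yx/principal_filterP : nbhs x U by exact: open_nbhs_nbhs.
Qed.

Lemma limits_principal (x : X) : limits (principal_filter x) = spec_down x.
Proof. by rewrite predeqE => y; split=> /spec_le_cvg. Qed.

Lemma continuous_spec_le (Z : topologicalType) (f : X -> Z) (x y : X) :
  continuous f -> spec_le x y -> spec_le (f x) (f y).
Proof.
by move=> cf xy U oU Ufx; apply: (xy (f @^-1` U)) => //; exact: open_comp.
Qed.

Lemma continuous_cvg_fmap (Z : topologicalType) (f : X -> Z)
    (F : set_system X) (x : X) :
  continuous f -> F --> x -> f @ F --> f x.
Proof. by move=> cf Fx A /cf; exact: Fx. Qed.

Lemma ultra_fmap (T : Type) (f : T -> X) (F : set_system T) :
  UltraFilter F -> UltraFilter (f @ F).
Proof.
move=> UF; split; first exact: fmap_proper_filter.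
move=> G PG sFG; rewrite predeqE => A; split=> [GA|]; last exact: sFG.
have [//|FnA] := in_ultra_setVsetC (f @^-1` A) UF.
have GnA : G (~` A) by exact: sFG.
by have /filter_ex [? []] : G (A `&` ~` A) by exact: filterI.
Qed.

Lemma limits_spec_downP (F : set_system X) (x : X) :
  limits F = spec_down x -> forall y, F --> y <-> spec_le y x.
Proof. by move=> limF y; rewrite -[F --> y]/(limits F y) limF. Qed.

Definition spec_antisym := forall x y : X, spec_le x y -> spec_le y x -> x = y.

Lemma spec_down_inj : spec_antisym -> injective (@spec_down X).
Proof.
move=> anti x y exy; apply: anti.
  by have : spec_down y x by rewrite -exy.
by have : spec_down x y by rewrite exy.
Qed.

Definition lbounds (K : Type) (z : K -> X) :=
  [set y : X | forall k, spec_le y (z k)].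

Definition codirected (K : Type) (z : K -> X) :=
  inhabited K /\
  forall k1 k2, exists k3, spec_le (z k3) (z k1) /\ spec_le (z k3) (z k2).

(* The down-sets of the [z k] are intersected with the open sets containing
   every [z k] so that each common lower bound is a limit of the refinement. *)
Lemma codirected_ultra_limits (K : Type) (z : K -> X) : codirected z ->
  exists W : set_system X, UltraFilter W /\ limits W = lbounds z.
Proof.
move=> [[k0] zdir].
pose D := [set kO : K * set X | open kO.2 /\ forall k, kO.2 (z k)].
pose B (kO : K * set X) := spec_down (z kO.1) `&` kO.2.
have FB : Filter (filter_from D B).
  apply: filter_from_filter; first by exists (k0, setT); split => //; exact: openT.
  move=> [k1 O1] [k2 O2] [oO1 zO1] [oO2 zO2].
  have [k3 [z31 z32]] := zdir k1 k2.
  exists (k3, O1 `&` O2).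
    by split=> [|k]; [exact: openI|split; [exact: zO1|exact: zO2]].
  move=> y [yz3 [y1 y2]].
  by split; split=> //; [exact: spec_le_trans yz3 z31|exact: spec_le_trans yz3 z32].
have PFB : ProperFilter (filter_from D B).
  apply: filter_from_proper => -[k O] [_ zO].
  by exists (z k); split; [exact: spec_le_refl|exact: zO].
have [W [UW BW]] := ultraFilterLemma PFB.
exists W; split=> //; rewrite predeqE => y; split.
  move=> Wy k U oU Uy.
  have WU : W U by apply: Wy; exact: open_nbhs_nbhs.
  have Wzk : W (spec_down (z k)).
    by apply: BW; exists (k, setT) => [|w []//]; split=> //; exact: openT.
  by have [w [Uw wzk]] := filter_ex (filterI WU Wzk); exact: wzk.
move=> yz A; rewrite nbhsE => -[V [oV Vy] VA].
apply: (filterS VA); apply: (filterS (P := B (k0, V))); first by move=> w [].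
by apply: BW; exists (k0, V) => //; split=> // k; exact: yz.
Qed.

(* [sober_ultra False] is local strong sobriety, [sober_ultra True] strong sobriety. *)
Definition sober_ultra (Q : Prop) :=
  forall W : set_system X, UltraFilter W -> (exists x : X, W --> x) \/ Q ->
    exists! x : X, limits W = spec_down x.

Lemma locally_strongly_soberE : locally_strongly_sober X <-> sober_ultra False.
Proof.
split=> [lss W UW [cW|[]]|sob W UW cW]; first exact: lss.
by apply: sob => //; left.
Qed.

Lemma strongly_soberE : strongly_sober X <-> sober_ultra True.
Proof. by split=> [ss W UW _|sob W UW]; [exact: ss|apply: sob => //; right]. Qed.

Variable Q : Prop.
Hypothesis sobX : sober_ultra Q.

Lemma sober_ultra_spec_antisym : spec_antisym.
Proof.
move=> x y xy yx.
have [|z [_ zuniq]] := sobX (principal_filter_ultra x).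
  by left; exists x; exact/spec_le_cvg.
rewrite -(zuniq x); last by rewrite limits_principal.
apply: zuniq; rewrite limits_principal predeqE => w.
by split=> wle; [exact: spec_le_trans wle xy|exact: spec_le_trans wle yx].
Qed.

Lemma sober_ultra_codirected_inf (K : Type) (z : K -> X) : codirected z ->
  (exists c, lbounds z c) \/ Q ->
  exists m, lbounds z m /\ forall w, lbounds z w -> spec_le w m.
Proof.
move=> zdir zQ; have [W [UW limW]] := codirected_ultra_limits zdir.
have [|m [limWm _]] := sobX UW.
  by case: zQ => [[c zc]|]; [left; exists c; rewrite -limW in zc|right].
rewrite limW in limWm; exists m; split; first by rewrite limWm.
by move=> w; rewrite limWm.
Qed.

End Specialization.

Section ProjectiveLimit.
Variables (I : Type) (le : I -> I -> Prop) (X : I -> topologicalType).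
Variable p : forall i j, le i j -> X j -> X i.
Arguments p : clear implicits.
Variables (Y : topologicalType) (q : forall i, Y -> X i).
Hypothesis limY : is_projective_limit p q.

Lemma limit_continuous i : continuous (q i).
Proof. by case: limY => -[+ _] _; apply. Qed.

Lemma limit_cone i j (h : le i j) y : p i j h (q j y) = q i y.
Proof. by case: limY => -[_ +] _; apply. Qed.

Let cone_cst (Z : topologicalType) (m : forall i, X i) :
  (forall i j h, p i j h (m j) = m i) -> is_cone p (fun i (_ : Z) => m i).
Proof.
by move=> mthr; split=> [i|i j h _]; [exact: cst_continuous|exact: mthr].
Qed.

Lemma limit_proj_inj (y y' : Y) : (forall i, q i y = q i y') -> y = y'.
Proof.
move=> qyy'; have [_ univ] := limY.
have [g [_ guniq]] := univ Y _ (cone_cst Y (fun i j h => limit_cone h y)).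
have -> : y = g y.
  by rewrite (guniq (fun=> y)) //; split=> //; exact: cst_continuous.
rewrite (guniq (fun=> y')) //.
by split=> [|i z]; [exact: cst_continuous|rewrite qyy'].
Qed.

Lemma limit_thread (y0 : Y) (m : forall i, X i) :
  (forall i j h, p i j h (m j) = m i) -> exists y, forall i, q i y = m i.
Proof.
move=> mthr; have [_ univ] := limY.
have [g [[_ gq] _]] := univ Y _ (cone_cst Y mthr).
by exists (g y0) => i; rewrite gq.
Qed.

Let Yinit := sup_topology (fun i => Topological.on (initial_topology (q i))).

(* The universal property makes the identity from the initial topology of the
   projections continuous, i.e. [Y] carries that initial topology. *)
Let id_init_continuous : continuous (id : Yinit -> Y).
Proof.
have qinit i : continuous (q i : Yinit -> X i).
  move=> y A /(@initial_continuous Y (X i) (q i) y) qA.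
  have /cvg_sup/(_ i) : nbhs (y : Yinit) --> (y : Yinit) by exact: cvg_refl.
  by apply.
have [_ univ] := limY.
have [g [[gc gq] _]] := univ Yinit _ (conj qinit limit_cone).
suff <- : g = id by [].
by apply: funext => y; apply: limit_proj_inj => i; exact: gq.
Qed.

Lemma cvg_limitP (F : set_system Y) (y : Y) : Filter F ->
  F --> y <-> forall i, q i @ F --> q i y.
Proof.
move=> FF; split=> [Fy i|Fq].
  exact: continuous_cvg_fmap (@limit_continuous i) Fy.
have Fy : F --> (y : Yinit).
  apply/cvg_sup => i A.
  rewrite (@nbhsE (initial_topology (q i))) => -[B [[C oC <-] Cy] BA].
  by apply: (filterS BA); apply: (Fq i); exact: open_nbhs_nbhs.
by move=> A /(@id_init_continuous y); exact: Fy.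
Qed.

Lemma spec_le_limitP (y y' : Y) :
  spec_le y y' <-> forall i, spec_le (q i y) (q i y').
Proof.
split=> [yy' i|qyy']; first exact: continuous_spec_le (@limit_continuous i) yy'.
apply/spec_le_cvg/cvg_limitP => i A /(proj1 (spec_le_cvg _ _) (qyy' i)).
by move/principal_filterP => qA; exact/principal_filterP.
Qed.

Lemma limit_spec_antisym :
  (forall i, spec_antisym (X i)) -> spec_antisym Y.
Proof.
move=> anti y y' /spec_le_limitP yy' /spec_le_limitP y'y.
by apply: limit_proj_inj => i; exact: anti.
Qed.

End ProjectiveLimit.

Section LimitSobriety.
Variables (I : Type) (le : I -> I -> Prop) (X : I -> topologicalType).
Variable p : forall i j, le i j -> X j -> X i.
Arguments p : clear implicits.
Hypothesis sysX : projective_system p.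
Variables (Y : topologicalType) (q : forall i, Y -> X i).
Hypothesis limY : is_projective_limit p q.
Variable Q : Prop.
Hypothesis sobX : forall i, sober_ultra (X i) Q.
Arguments sobX : clear implicits.

Lemma bonding_spec_le i j (h : le i j) a b :
  spec_le a b -> spec_le (p i j h a) (p i j h b).
Proof. by have [_ pcont _ _] := sysX; exact: continuous_spec_le (pcont i j h). Qed.

Definition fam_le (m m' : forall i, X i) := forall i, spec_le (m i) (m' i).

Section Candidates.
Variable L : set Y.
Hypothesis L_Q : L !=set0 \/ Q.
Variable x : forall i, X i.
Hypothesis x_mono : forall i j h, spec_le (p i j h (x j)) (x i).
Hypothesis L_x : forall y, L y -> fam_le (fun i => q i y) x.

Definition candidate (m : forall i, X i) :=
  [/\ forall i j h, spec_le (p i j h (m j)) (m i), fam_le m x &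
      forall y, L y -> fam_le (fun i => q i y) m].

Lemma candidate_x : candidate x.
Proof. by split=> // i; exact: spec_le_refl. Qed.

Lemma codirected_inf_above_L i (K : Type) (z : K -> X i) : codirected z ->
  (forall y, L y -> lbounds z (q i y)) ->
  exists m, lbounds z m /\ forall w, lbounds z w -> spec_le w m.
Proof.
move=> zdir Lz; apply: (sober_ultra_codirected_inf (sobX i) zdir).
by case: L_Q => [[y Ly]|]; [left; exists (q i y); exact: Lz|right].
Qed.

Lemma candidate_chain_lbound (A : set (forall i, X i)) :
  A `<=` candidate -> total_on A fam_le ->
  exists2 m, candidate m & forall a, A a -> fam_le m a.
Proof.
move=> Acand Atot; have [[a0 Aa0]|A0] := pselect (A !=set0); last first.
  by exists x => [|a Aa]; [exact: candidate_x|case: A0; exists a].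
pose z i (k : {a | A a}) := sval k i.
have zinf i : exists mi, lbounds (z i) mi /\ forall w, lbounds (z i) w -> spec_le w mi.
  apply: (codirected_inf_above_L (z := z i)); last first.
    by move=> y Ly [a Aa]; have [_ _] := Acand a Aa; apply.
  split=> [|[a Aa] [b Ab]]; first exact: inhabits (exist _ a0 Aa0).
  have [ab|ba] := Atot a b Aa Ab.
    by exists (exist _ a Aa); split; [exact: spec_le_refl|exact: ab].
  by exists (exist _ b Ab); split; [exact: ba|exact: spec_le_refl].
have [m mE] := all_sig (fun i => cid (zinf i)).
have m_below a (Aa : A a) i : spec_le (m i) (a i).
  exact: (proj1 (mE i) (exist _ a Aa)).
exists m => //; split.
- move=> i j h; apply: (proj2 (mE i)) => -[a Aa] /=.
  have [amono _ _] := Acand a Aa.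
  by apply: spec_le_trans (amono i j h); apply: bonding_spec_le; exact: m_below.
- move=> i; have [_ a0x _] := Acand a0 Aa0.
  exact: spec_le_trans (m_below a0 Aa0 i) (a0x i).
- by move=> y Ly i; apply: (proj2 (mE i)) => -[a Aa] /=; have [_ _] := Acand a Aa; apply.
Qed.

Lemma exists_minimal_candidate :
  exists2 m, candidate m & forall m', candidate m' -> fam_le m' m -> fam_le m m'.
Proof.
pose R (a b : {m | candidate m}) := `[< fam_le (sval b) (sval a) >].
have [[m cm] mmin] : exists t, premaximal R t.
  apply: (ZL_preorder (exist _ x candidate_x)).
  - by move=> t; apply/asboolP => i; exact: spec_le_refl.
  - move=> r s t /asboolP rs /asboolP st; apply/asboolP => i.
    exact: spec_le_trans (st i) (rs i).
  move=> A Atot; have [||m cm mA] := @candidate_chain_lbound (sval @` A).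
  - by move=> _ [[a ca] _ <-].
  - move=> _ _ [s As <-] [t At <-].
    by case: (Atot s t As At) => /asboolP; [right|left].
  by exists (exist _ m cm) => s As; apply/asboolP; apply: mA; exists s.
exists m => // m' cm' m'm.
by have /asboolP := mmin (exist _ m' cm') (asboolT m'm).
Qed.

Lemma candidate_shrink m : candidate m ->
  exists2 m', candidate m' & forall i j h, spec_le (m' i) (p i j h (m j)).
Proof.
move=> [mmono mx Lm].
have [[lerefl letrans _ ledir] _ pid pcomp] := sysX.
pose z i (k : {j | le i j}) := let: exist j h := k in p i j h (m j).
have zinf i : exists mi, lbounds (z i) mi /\ forall w, lbounds (z i) w -> spec_le w mi.
  apply: (codirected_inf_above_L (z := z i)); last first.
    move=> y Ly [j h]; rewrite /z /= -(limit_cone limY h y).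
    by apply: bonding_spec_le; exact: Lm.
  split=> [|[j1 h1] [j2 h2]]; first exact: inhabits (exist _ i (lerefl i)).
  have [k [h1k h2k]] := ledir j1 j2.
  exists (exist _ k (letrans _ _ _ h1 h1k)); rewrite /z /=.
  by split; [rewrite -(pcomp i j1 k h1 h1k)|rewrite -(pcomp i j2 k h2 h2k)];
    apply: bonding_spec_le; exact: mmono.
have [m' m'E] := all_sig (fun i => cid (zinf i)).
have m'_below i j h : spec_le (m' i) (p i j h (m j)).
  exact: (proj1 (m'E i) (exist _ j h)).
exists m' => //; split.
- move=> i k hik; apply: (proj2 (m'E i)) => -[j hij]; rewrite /z /=.
  have [l [hjl hkl]] := ledir j k.
  have := bonding_spec_le (h := hik) (m'_below k l hkl).
  rewrite (pcomp i k l hik hkl (letrans _ _ _ hij hjl)).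
  rewrite -(pcomp i j l hij hjl (letrans _ _ _ hij hjl)) => m'l.
  by apply: spec_le_trans m'l _; apply: bonding_spec_le; exact: mmono.
- move=> i; have := m'_below i i (lerefl i); rewrite pid => m'm.
  exact: spec_le_trans m'm (mx i).
- move=> y Ly i; apply: (proj2 (m'E i)) => -[j h]; rewrite /z /=.
  by rewrite -(limit_cone limY h y); apply: bonding_spec_le; exact: Lm.
Qed.

Lemma exists_candidate_thread :
  exists2 m, candidate m & forall i j h, p i j h (m j) = m i.
Proof.
have [m cm mmin] := exists_minimal_candidate.
have [m' cm' m'_below] := candidate_shrink cm.
have [[lerefl _ _ _] _ pid _] := sysX.
have mm' : fam_le m m'.
  by apply: mmin => // i; have := m'_below i i (lerefl i); rewrite pid.
exists m => // i j h; apply: (sober_ultra_spec_antisym (sobX i)).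
  by have [mmono _ _] := cm; exact: mmono.
exact: spec_le_trans (mm' i) (m'_below i j h).
Qed.

End Candidates.

Lemma limit_ultra_limits (U : set_system Y) : UltraFilter U ->
  (exists y : Y, U --> y) \/ Q ->
  exists x : forall i, X i, (forall i j h, spec_le (p i j h (x j)) (x i)) /\
    limits U = [set y | fam_le (fun i => q i y) x].
Proof.
move=> UU Uconv.
have qUlim i : {xi | limits (q i @ U) = spec_down xi}.
  apply: cid; have [|xi [limxi _]] := sobX i (q i @ U) (ultra_fmap (q i) UU).
    case: Uconv => [[y Uy]|]; last by right.
    left; exists (q i y).
    exact: continuous_cvg_fmap (limit_continuous limY (i := i)) Uy.
  by exists xi.
have [x xE] := all_sig qUlim.
have xP i := limits_spec_downP (xE i).
exists x; split.
  move=> i j h; apply/xP.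
  have -> : q i = p i j h \o q j by apply: funext => y; rewrite /= limit_cone.
  have [_ pcont _ _] := sysX.
  have qjUx : q j @ U --> x j by apply/xP; exact: spec_le_refl.
  exact: continuous_cvg_fmap (pcont i j h) qjUx.
rewrite predeqE => y; rewrite /limits /= (cvg_limitP limY).
by split=> qy i; apply/xP; exact: qy.
Qed.

Theorem limit_sober_ultra : sober_ultra Y Q.
Proof.
move=> U UU Uconv; have [x [x_mono limUE]] := limit_ultra_limits UU Uconv.
have L_Q : limits U !=set0 \/ Q by case: Uconv => [[y Uy]|]; [left; exists y|right].
have L_x y : limits U y -> fam_le (fun i => q i y) x by rewrite limUE.
have [m [_ mx Lm] mthr] := exists_candidate_thread L_Q x_mono L_x.
have [y0 _] := @filter_ex _ U _ setT filterT.
have [ym qym] := limit_thread limY y0 mthr.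
have limUym : limits U = spec_down ym.
  rewrite predeqE => y; split=> [Uy|/(spec_le_limitP limY) yym].
    by apply/(spec_le_limitP limY) => i; rewrite qym; exact: Lm.
  by rewrite limUE => i; apply: spec_le_trans (yym i) _; rewrite qym; exact: mx.
exists ym; split=> // y limUy; apply: spec_down_inj.
  apply: limit_spec_antisym limY _ => i; exact: sober_ultra_spec_antisym (sobX i).
by rewrite -limUym.
Qed.

End LimitSobriety.

Theorem theorem5p1 :
  forall (I : Type) (le : I -> I -> Prop) (X : I -> topologicalType)
    (p : forall i j, le i j -> X j -> X i),
  projective_system p ->
  (forall (Y : topologicalType) (q : forall i, Y -> X i),
      is_projective_limit p q ->
      (forall i, locally_strongly_sober (X i)) -> locally_strongly_sober Y) /\
  (forall (Y : topologicalType) (q : forall i, Y -> X i),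
      is_projective_limit p q ->
      (forall i, strongly_sober (X i)) -> strongly_sober Y).
Proof.
move=> I le X p sysX; split=> Y q limY sobX.
  apply/locally_strongly_soberE/(limit_sober_ultra sysX limY) => i.
  exact/locally_strongly_soberE.
apply/strongly_soberE/(limit_sober_ultra sysX limY) => i.
exact/strongly_soberE.
Qed.
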